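(* Let $\mathcal G$ be a directed graph with no self loops, with $n$ vertices and edge set $\mathcal E=\{1,\dots,m\}$, and let $B=S-D$ be its incidence matrix. Let $g\in\mathcal E$ and $x\in\mathbb{R}^m$, and let \[ z=(I+B^\mathsf{T}DE^g)\,x. \] Then $z_g=0$. Moreover, for every edge $l\in\mathcal E$ with $\mathrm{src}(l)\neq\mathrm{dst}(g)$ and $\mathrm{dst}(l)\neq\mathrm{dst}(g)$, we have $z_l=x_l$.
   Context: $S,D\in\mathbb{R}^{n\times m}$ are defined by $S_{ie}=1$ if node $i$ is the source of edge $e$ (else $0$), and $D_{ie}=1$ if node $i$ is the destination of edge $e$ (else $0$). $\mathrm{src}(e)$ and $\mathrm{dst}(e)$ denote the source and destination of edge $e$. $E^g\in\mathbb{R}^{m\times m}$ is the matrix with all entries zero except $E^g_{gg}=1$. *)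

From mathcomp Require Import all_boot all_order all_algebra.
Set Implicit Arguments. Unset Strict Implicit. Unset Printing Implicit Defensive.
Import GRing.Theory Num.Theory.
Local Open Scope ring_scope.

(* A directed graph with n vertices and m edges 'I_m (edges 1..m are 0..m-1),
   given by source and destination maps. *)

Definition srcmx (R : ringType) (n m : nat) (src : 'I_m -> 'I_n) : 'M[R]_(n, m) :=
  \matrix_(i < n, e < m) (if i == src e then 1 else 0).

Definition dstmx (R : ringType) (n m : nat) (dst : 'I_m -> 'I_n) : 'M[R]_(n, m) :=
  \matrix_(i < n, e < m) (if i == dst e then 1 else 0).

Definition incmx (R : ringType) (n m : nat) (src dst : 'I_m -> 'I_n) : 'M[R]_(n, m) :=
  srcmx R src - dstmx R dst.

Definition Eg (R : ringType) (m : nat) (g : 'I_m) : 'M[R]_m := delta_mx g g.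

From mathcomp Require Import all_boot all_order all_algebra.
Import GRing.Theory Num.Theory.
Local Open Scope ring_scope.

(* Since [B^T D E^g x] has a single nonzero column, [z = x + x_g B^T e_(dst g)],
   i.e. [z_l = x_l + x_g B_(dst g, l)]. The entry [B_(dst g, l)] vanishes unless
   [l] touches [dst g], and equals [-1] for [l = g] because [g] is not a loop. *)

Lemma mulmx_delta_mxE (R : ringType) (m n p q : nat) (A : 'M[R]_(m, n))
    (j : 'I_n) (k : 'I_p) (C : 'M[R]_(p, q)) i l :
  (A *m delta_mx j k *m C) i l = A i j * C k l.
Proof.
rewrite -(mul_delta_mx (0 : 'I_1)) mulmxA -colE -mulmxA -rowE.
by rewrite mxE big_ord1 !mxE.
Qed.

Lemma mulmx_dstmxE (R : ringType) (p n m : nat) (dst : 'I_m -> 'I_n)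
    (A : 'M[R]_(p, n)) i e :
  (A *m dstmx R dst) i e = A i (dst e).
Proof.
rewrite mxE (bigD1 (dst e)) //= big1 => [|k /negbTE nk]; rewrite mxE.
  by rewrite eqxx mulr1 addr0.
by rewrite nk mulr0.
Qed.

Lemma incmxE (R : ringType) (n m : nat) (src dst : 'I_m -> 'I_n) i e :
  incmx R src dst i e = (i == src e)%:R - (i == dst e)%:R.
Proof. by rewrite !mxE; case: eqP; case: eqP. Qed.

Lemma incmx_update_entry (R : ringType) (n m : nat) (src dst : 'I_m -> 'I_n)
    (g : 'I_m) (x : 'cV[R]_m) l :
  ((1%:M + (incmx R src dst)^T *m dstmx R dst *m Eg R g) *m x) l 0 =
  x l 0 + incmx R src dst (dst g) l * x g 0.
Proof.
by rewrite mulmxDl mul1mx mxE mulmx_delta_mxE mulmx_dstmxE mxE.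
Qed.

Theorem lemma3 (R : realFieldType) (n m : nat) (src dst : 'I_m -> 'I_n)
  (noloop : forall e : 'I_m, src e != dst e)
  (g : 'I_m) (x : 'cV[R]_m) :
  let B := incmx R src dst in
  let z := (1%:M + B^T *m dstmx R dst *m Eg R g) *m x in
  z g 0 = 0 /\
  (forall l : 'I_m, src l != dst g -> dst l != dst g -> z l 0 = x l 0).
Proof.
move=> B z; rewrite /z /B; split=> [|l srcl dstl];
  rewrite incmx_update_entry incmxE.
  by rewrite eq_sym (negbTE (noloop g)) eqxx sub0r mulN1r subrr.
by rewrite eq_sym (negbTE srcl) eq_sym (negbTE dstl) subrr mul0r addr0.
Qed.
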